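(* Let $G=(V,E,w)$ be a graph with positive vertex weights and maximum degree $\Delta\ge1$, let $1\le\gamma\le\Delta$, and suppose $G$ is a $\gamma$-stable instance of \texttt{MIS} with maximum weight independent set $I^*$. Then $w(I^* )>\frac{\gamma}{2\Delta}\,w(V)$.
   Context: \texttt{MIS}: given a graph $G=(V,E)$ with weights $w:V\to\mathbb{R}_{>0}$, find an independent set maximizing $w(I)=\sum_{u\in I}w_u$; $w(X)=\sum_{u\in X}w_u$. For $\gamma\ge1$, a $\gamma$-perturbation of $w$ is any $w'$ with $w_u\le w'_u\le\gamma w_u$ for all $u$. The instance is $\gamma$-stable if it has a unique maximum weight independent set $I^*$ and $I^*$ remains the unique maximum weight independent set under every $\gamma$-perturbation of $w$. *)

From HB Require Import structures.
From mathcomp Require Import all_boot all_order all_algebra.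
Set Implicit Arguments. Unset Strict Implicit. Unset Printing Implicit Defensive.
Import Order.TTheory GRing.Theory Num.Theory.
Local Open Scope ring_scope.

Definition simple_graph (T : finType) (e : rel T) : Prop :=
  symmetric e /\ irreflexive e.

Definition deg (T : finType) (e : rel T) (x : T) : nat := #|[set y | e x y]|.

Definition maxdeg (T : finType) (e : rel T) : nat := (\max_(x : T) deg e x)%N.

Definition independent (T : finType) (e : rel T) (I : {set T}) : bool :=
  [forall x in I, forall y in I, ~~ e x y].

Definition wt (R : realFieldType) (T : finType) (w : T -> R) (X : {set T}) : R :=
  \sum_(u in X) w u.

Definition unique_mwis (R : realFieldType) (T : finType) (e : rel T)
    (w : T -> R) (I : {set T}) : Prop :=
  independent e I /\
  forall J : {set T}, independent e J -> J != I -> wt w J < wt w I.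

Definition perturbation (R : realFieldType) (T : finType) (gamma : R)
    (w w' : T -> R) : Prop :=
  forall u, w u <= w' u /\ w' u <= gamma * w u.

Definition stable_with (R : realFieldType) (T : finType) (e : rel T)
    (w : T -> R) (gamma : R) (I : {set T}) : Prop :=
  unique_mwis e w I /\
  forall w' : T -> R, perturbation gamma w w' -> unique_mwis e w' I.

From mathcomp Require Import all_boot all_order all_algebra.
From mathcomp Require Import lra.
Set Implicit Arguments. Unset Strict Implicit. Unset Printing Implicit Defensive.
Import Order.TTheory GRing.Theory Num.Theory.
Local Open Scope ring_scope.

(* Raise every weight outside I by the factor gamma, where I is the optimum.
   I stays the unique optimum, so for each u outside I the exchange
   I - N(u) + u loses: gamma w(u) < w(N(u) /\ I).  Summing over u and
   counting every x in I at most Delta times gives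
   gamma w(V - I) < Delta w(I); adding gamma w(I) <= Delta w(I)
   yields gamma w(V) < 2 Delta w(I). *)

Lemma independent_noedge (T : finType) (e : rel T) (I : {set T}) x y :
  independent e I -> x \in I -> y \in I -> ~~ e x y.
Proof.
by move=> /forallP/(_ x)/implyP Ix xI yI; move: (Ix xI) => /forallP/(_ y)/implyP; apply.
Qed.

Lemma independent_exchange (T : finType) (e : rel T) (I : {set T}) u :
  simple_graph e -> independent e I ->
  independent e (u |: [set x in I | ~~ e u x]).
Proof.
move=> [esym eirr] indI.
apply/forallP => x; apply/implyP => xJ; apply/forallP => y; apply/implyP => yJ.
move: xJ yJ; rewrite !inE.
case/orP=> [/eqP-> | /andP[xI nx]]; case/orP=> [/eqP-> | /andP[yI ny]] //.
- by rewrite eirr.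
- by rewrite esym.
- exact: independent_noedge indI xI yI.
Qed.

Lemma independent_maxdeg_gt0_notin (T : finType) (e : rel T) (I : {set T}) :
  (0 < maxdeg e)%N -> independent e I -> exists u, u \notin I.
Proof.
move=> D_gt0 indI; apply/existsP; apply: contraLR D_gt0.
rewrite negb_exists -leqNgt leqn0 => /forallP allI.
apply/eqP/big1 => x _; apply/eqP; rewrite cards_eq0; apply/eqP/setP => y.
by rewrite !inE; apply/negbTE/(independent_noedge indI); exact/negbNE.
Qed.

Section Weights.

Variables (R : realFieldType) (T : finType) (e : rel T) (w : T -> R).

Lemma sum_neighbours_le_maxdeg (A B : {set T}) :
  symmetric e -> (forall u, 0 <= w u) ->
  \sum_(u in A) \sum_(x in B | e u x) w x <= (maxdeg e)%:R * wt w B.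
Proof.
move=> esym w_ge0; rewrite /wt mulr_sumr.
under eq_bigr => u _ do rewrite big_mkcondr.
rewrite exchange_big /=; apply: ler_sum => x _.
apply: (@le_trans _ _ (\sum_(u : T) (if e x u then w x else 0))).
  rewrite [X in _ <= X](bigID (mem A)) /= -[X in X <= _]addr0 lerD //.
    by apply: ler_sum => u _; rewrite (esym u x).
  by apply: sumr_ge0 => u _; case: ifP.
rewrite -big_mkcond /= sumr_const -[_ *+ _]mulr_natl ler_wpM2r // ler_nat.
by rewrite -cardsE; exact: (leq_bigmax (F := deg e) x).
Qed.

Variables (gamma : R) (I : {set T}).

Definition boost (x : T) : R := if x \in I then w x else gamma * w x.

Lemma perturbation_boost :
  1 <= gamma -> (forall u, 0 <= w u) -> perturbation gamma w boost.
Proof.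
move=> g1 w_ge0 u; rewrite /boost.
have w_le_gw : w u <= gamma * w u by rewrite -[X in X <= _]mul1r ler_wpM2r.
by case: (u \in I).
Qed.

Lemma sum_boost_sub (J : {set T}) :
  J \subset I -> \sum_(x in J) boost x = \sum_(x in J) w x.
Proof. by move=> /subsetP JI; apply: eq_bigr => x /JI; rewrite /boost => ->. Qed.

Lemma boost_exchange_lt u :
  simple_graph e -> unique_mwis e boost I -> u \notin I ->
  gamma * w u < \sum_(x in I | e u x) w x.
Proof.
move=> eG [indI opt] uI.
have neqI : u |: [set x in I | ~~ e u x] != I.
  by apply: contraNneq uI => <-; rewrite setU11.
have := opt _ (independent_exchange u eG indI) neqI.
rewrite /wt big_setU1 /=; last by rewrite inE (negbTE uI).
have subI : [set x in I | ~~ e u x] \subset I by apply/subsetP => x /[!inE] /andP[].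
rewrite !sum_boost_sub ?subxx // /boost (negbTE uI).
have -> : \sum_(x in [set x in I | ~~ e u x]) w x = \sum_(x in I | ~~ e u x) w x.
  by apply: eq_bigl => x; rewrite inE.
rewrite (bigID (e u) (mem I)) /=; lra.
Qed.

End Weights.

Theorem mainTheorem5 (R : realFieldType) (T : finType) (e : rel T)
    (w : T -> R) (gamma : R) (Istar : {set T}) :
  simple_graph e ->
  (forall u, 0 < w u) ->
  (1 <= maxdeg e)%N ->
  1 <= gamma -> gamma <= (maxdeg e)%:R ->
  stable_with e w gamma Istar ->
  wt w Istar > gamma / (2 * (maxdeg e)%:R) * wt w [set: T].
Proof.
move=> eG w_gt0 D_ge1 g1 gD [[indI _] stab].
have w_ge0 u : 0 <= w u by exact/ltW.
have opt := stab _ (perturbation_boost Istar g1 w_ge0).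
have [u0 u0I] := independent_maxdeg_gt0_notin D_ge1 indI.
have outside : gamma * \sum_(u in ~: Istar) w u < (maxdeg e)%:R * wt w Istar.
  apply: lt_le_trans (sum_neighbours_le_maxdeg _ _ eG.1 w_ge0).
  rewrite mulr_sumr; apply: ltr_sum => [|u].
    by apply/hasP; exists u0; rewrite ?mem_index_enum ?inE.
  by rewrite inE; exact: boost_exchange_lt.
have inside : gamma * wt w Istar <= (maxdeg e)%:R * wt w Istar.
  by rewrite ler_wpM2r // sumr_ge0.
have D_gt0 : 0 < (maxdeg e)%:R :> R by rewrite ltr0n.
rewrite /wt (big_setID Istar) /= setTI setTD -/(wt w Istar).
rewrite mulrAC ltr_pdivrMr ?mulr_gt0 //.
lra.
Qed.
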